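(* (1) The natural numbers $n$ (identified with the sets $[n]$) as objects, together with the Kleisli arrows $f:[m]\to T([n])$ that satisfy the realizability condition, form a subcategory of the Kleisli category $\mathrm{Kl}(T)$ of the play monad; this subcategory is $\mathbb S^{\mathbb P}_r$ (its composition being the composition of $\mathbb S^{\mathbb P}_r$). (2) $\mathbb S^{\mathbb P}_r$ inherits from $\mathrm{Kl}(T)$ the symmetric monoidal structure whose monoidal product is the coproduct.
   Context: Notation: $[k]=\{1,\dots,k\}$. The play monad $(T,\eta,\mu)$ on $\mathbf{Set}$: $T(X)=X+\mathbb R\times X+\{\exists^*\}+\{\forall^*\}$, with $T(g)$ acting by $x\mapsto g(x)$, $(r,x)\mapsto(r,g(x))$, fixing $\exists^*,\forall^*$; $\eta_X(x)=x$; $\mu_X:T(T(X))\to T(X)$ sends elements of the first summand $T(X)$ to themselves, $\exists^*\mapsto\exists^*$, $\forall^*\mapsto\forall^*$, and on $\mathbb R\times T(X)$: $(r,x)\mapsto(r,x)$ for $x\in X$, $(r,(q,x))\mapsto(r+q,x)$, $(r,\exists^* )\mapsto\exists^*$, $(r,\forall^* )\mapsto\forall^*$. $\mathrm{Kl}(T)$ has sets as objects and functions $X\to T(Y)$ as arrows $X\to Y$, with Kleisli composition. Realizability condition for $f:[m]\to T([n])$: if $f(i)=k\in[n]$ then for every $j\in[m]\setminus\{i\}$, $f(j)\ne k$ and $f(j)\ne(r,k)$ for all $r\in\mathbb R$. $\mathbb S^{\mathbb P}_r$: objects natural numbers; arrows $m\to n$ are functions $f:[m]\to T([n])$ satisfying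 realizability; composition of $f:m\to l$, $g:l\to n$ (diagrammatic): $(f;g)(i)=f(i)$ if $f(i)\in\{\exists^*,\forall^*\}$; $g(j)$ if $f(i)=j\in[l]$; $g(j)$ if $f(i)=(r,j)$ and $g(j)\in\{\exists^*,\forall^*\}$; $(r,k)$ if $f(i)=(r,j)$, $g(j)=k\in[n]$; $(r+r',k)$ if $f(i)=(r,j)$, $g(j)=(r',k)$; identity $i\mapsto i$. Coproducts $[m]+[k]$ are identified with $[m+k]$ in the standard way. *)

From Stdlib Require Import Reals.
From mathcomp Require Import all_boot.
Set Implicit Arguments. Unset Strict Implicit. Unset Printing Implicit Defensive.

Inductive play (X : Type) : Type :=
| Pure : X -> play X
| Pay  : R -> X -> play X
| ExStar : play X
| AllStar : play X.
Arguments ExStar {X}. Arguments AllStar {X}.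

Definition Tmap {X Y : Type} (g : X -> Y) (t : play X) : play Y :=
  match t with
  | Pure x => Pure (g x)
  | Pay r x => Pay r (g x)
  | ExStar => ExStar
  | AllStar => AllStar
  end.

Definition eta {X : Type} (x : X) : play X := Pure x.

Definition mu {X : Type} (t : play (play X)) : play X :=
  match t with
  | Pure u => u
  | Pay r (Pure x) => Pay r x
  | Pay r (Pay q x) => Pay (Rplus r q) x
  | Pay _ ExStar => ExStar
  | Pay _ AllStar => AllStar
  | ExStar => ExStar
  | AllStar => AllStar
  end.

Definition kcomp {X Y Z : Type} (f : X -> play Y) (g : Y -> play Z) : X -> play Z :=
  fun x => mu (Tmap g (f x)).

Definition realizable {X Y : Type} (f : X -> play Y) : Prop :=
  forall i k, f i = Pure k ->
    forall j, j <> i -> f j <> Pure k /\ (forall r, f j <> Pay r k).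

(* The composition of S^P_r, as given by its case table *)
Definition scomp {m l n : nat} (f : 'I_m -> play 'I_l) (g : 'I_l -> play 'I_n)
  : 'I_m -> play 'I_n :=
  fun i =>
    match f i with
    | ExStar => ExStar
    | AllStar => AllStar
    | Pure j => g j
    | Pay r j =>
        match g j with
        | ExStar => ExStar
        | AllStar => AllStar
        | Pure k => Pay r k
        | Pay r' k => Pay (Rplus r r') k
        end
    end.

Definition sid (n : nat) : 'I_n -> play 'I_n := fun i => Pure i.

(* Coproduct monoidal product in Kl(T), transported along [m]+[k] = [m+k]
   (split / unsplit of fintype). *)
Definition tensor {m m' k k' : nat} (f : 'I_m -> play 'I_m') (g : 'I_k -> play 'I_k')
  : 'I_(m + k) -> play 'I_(m' + k') :=
  fun i => match split i with
           | inl a => Tmap (@lshift m' k') (f a)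
           | inr b => Tmap (@rshift m' k') (g b)
           end.

(* Structural isomorphisms of the cocartesian structure on sets, transported
   along the identification; in Kl(T) they are eta o (these bijections). *)
Definition assoc_ord (m k l : nat) (i : 'I_(m + k + l)) : 'I_(m + (k + l)) :=
  match split i with
  | inl j => match split j with
             | inl a => lshift (k + l) a
             | inr b => rshift m (lshift l b)
             end
  | inr c => rshift m (rshift k c)
  end.

Definition assoc_inv_ord (m k l : nat) (i : 'I_(m + (k + l))) : 'I_(m + k + l) :=
  match split i with
  | inl a => lshift l (lshift k a)
  | inr j => match split j with
             | inl b => lshift l (rshift m b)
             | inr c => rshift (m + k) c
             end
  end.

Definition lunit_ord (m : nat) (i : 'I_(0 + m)) : 'I_m := cast_ord (add0n m) i.
Definition lunit_inv_ord (m : nat) (i : 'I_m) : 'I_(0 + m) := cast_ord (esym (add0n m)) i.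
Definition runit_ord (m : nat) (i : 'I_(m + 0)) : 'I_m := cast_ord (addn0 m) i.
Definition runit_inv_ord (m : nat) (i : 'I_m) : 'I_(m + 0) := cast_ord (esym (addn0 m)) i.

Definition braid_ord (m k : nat) (i : 'I_(m + k)) : 'I_(k + m) :=
  match split i with
  | inl a => rshift k a
  | inr b => lshift m b
  end.

Arguments sid n i : clear implicits.
Arguments assoc_ord m k l i : clear implicits.
Arguments assoc_inv_ord m k l i : clear implicits.
Arguments lunit_ord m i : clear implicits.
Arguments lunit_inv_ord m i : clear implicits.
Arguments runit_ord m i : clear implicits.
Arguments runit_inv_ord m i : clear implicits.
Arguments braid_ord m k i : clear implicits.

(* Forgetting payoffs, an element of T(X) either lands on a position x in X
   or on one of the stars; this map T -> option is a monad morphism.  In its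
   terms realizability says that a position reached purely by f from i is
   reached by f from no other j, and this property is preserved by Kleisli
   composition, by the coproduct of arrows and by reindexing along
   injections.  The structural isomorphisms of the coproduct monoidal
   structure are eta composed with bijections, hence realizable. *)

From Stdlib Require Import Reals.
From mathcomp Require Import all_boot.

Definition target {X : Type} (t : play X) : option X :=
  match t with
  | Pure x | Pay _ x => Some x
  | ExStar | AllStar => None
  end.

Lemma target_Tmap (X Y : Type) (h : X -> Y) (t : play X) :
  target (Tmap h t) = omap h (target t).
Proof. by case: t. Qed.

Lemma target_kcomp (X Y Z : Type) (f : X -> play Y) (g : Y -> play Z) (x : X) :
  target (kcomp f g x) = obind (fun y => target (g y)) (target (f x)).
Proof. by rewrite /kcomp; case: (f x) => [y|r y||] //=; case: (g y). Qed.

Lemma Tmap_Pure {X Y : Type} {h : X -> Y} {t : play X} {y : Y} :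
  Tmap h t = Pure y -> exists2 x, t = Pure x & y = h x.
Proof. by case: t => //= x [<-]; exists x. Qed.

Lemma kcomp_Pure {X Y Z : Type}
    {f : X -> play Y} {g : Y -> play Z} {x : X} {z : Z} :
  kcomp f g x = Pure z -> exists2 y, f x = Pure y & g y = Pure z.
Proof.
by rewrite /kcomp; case: (f x) => [y|r y||] //=; [exists y | case: (g y)].
Qed.

Lemma kcompE (m l n : nat) (f : 'I_m -> play 'I_l) (g : 'I_l -> play 'I_n) :
  kcomp f g =1 scomp f g.
Proof. by move=> i; rewrite /kcomp /scomp; case: (f i). Qed.

Lemma realizableP {X : eqType} {Y : Type} (f : X -> play Y) :
  realizable f <->
  (forall i j k, f i = Pure k -> target (f j) = Some k -> j = i).
Proof.
split=> [fR i j k fi fj | fR i k fi j ji].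
  have [// | /eqP /(fR _ _ fi) [notPure notPay]] := eqVneq j i; exfalso.
  by move: fj; case: (f j) notPure notPay => //= [y|r y] notPure notPay [yk];
    [apply: notPure | apply: (notPay r)]; rewrite yk.
by split=> [fj | r fj]; apply: ji; apply: (fR i j k fi); rewrite fj.
Qed.

Lemma realizable_eq {X Y : Type} (f g : X -> play Y) :
  f =1 g -> realizable f -> realizable g.
Proof.
by move=> fg fR i k; rewrite -fg => /fR gR j /gR; rewrite -!fg.
Qed.

Lemma realizable_eta_inj (X Y : Type) (h : X -> Y) :
  injective h -> realizable (fun x => eta (h x)).
Proof. by move=> hI i k [<-] j ji; split=> // [[/hI]]. Qed.

Lemma realizable_kcomp (X Y : eqType) (Z : Type)
    (f : X -> play Y) (g : Y -> play Z) :
  realizable f -> realizable g -> realizable (kcomp f g).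
Proof.
move=> /(realizableP f) fR /(realizableP g) gR.
apply/realizableP => i j k /kcomp_Pure[y fi gy].
rewrite target_kcomp; case fj: (target (f j)) => [y'|] //= gy'.
by apply: (fR _ _ y fi); rewrite fj (gR _ _ _ gy gy').
Qed.

Lemma realizable_comp_inj (X X' Y : Type) (f : X -> play Y) (h : X' -> X) :
  injective h -> realizable f -> realizable (fun x => f (h x)).
Proof. by move=> hI fR i k /fR fiR j ji; apply: fiR => /hI. Qed.

Lemma realizable_Tmap_inj (X : eqType) (Y Y' : Type)
    (f : X -> play Y) (h : Y -> Y') :
  injective h -> realizable f -> realizable (fun x => Tmap h (f x)).
Proof.
move=> hI /(realizableP f) fR; apply/realizableP => i j k /Tmap_Pure[y fi ->].
rewrite target_Tmap.
case: (target (f j)) (fR i j y fi) => //= y' jR [/hI yy].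
by apply: jR; rewrite yy.
Qed.

Definition sum_tensor {X X' Y Y' : Type}
    (f : X -> play Y) (g : X' -> play Y') (s : X + X') : play (Y + Y') :=
  match s with
  | inl x => Tmap inl (f x)
  | inr x' => Tmap inr (g x')
  end.

Lemma realizable_sum_tensor (X X' : eqType) (Y Y' : Type)
    (f : X -> play Y) (g : X' -> play Y') :
  realizable f -> realizable g -> realizable (sum_tensor f g).
Proof.
move=> /(realizableP f) fR /(realizableP g) gR; apply/realizableP.
case=> [x|x'] [y|y'] k /Tmap_Pure[z fz ->]; rewrite /= target_Tmap;
  [case: (target (f y)) (fR x y z fz) | case: (target (g y')) |
   case: (target (f y)) | case: (target (g y')) (gR x' y' z fz)] => //=.
- by move=> a jR [az]; rewrite (jR (congr1 Some az)).
- by move=> a jR [az]; rewrite (jR (congr1 Some az)).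
Qed.

Lemma tensorE {m m' k k' : nat}
    (f : 'I_m -> play 'I_m') (g : 'I_k -> play 'I_k') :
  tensor f g =1 fun i => Tmap unsplit (sum_tensor f g (split i)).
Proof.
by move=> i; rewrite /tensor; case: (split i) => [a|b] /=;
  [case: (f a) | case: (g b)].
Qed.

Lemma realizable_tensor (m m' k k' : nat)
    (f : 'I_m -> play 'I_m') (g : 'I_k -> play 'I_k') :
  realizable f -> realizable g -> realizable (tensor f g).
Proof.
move=> fR gR; apply: realizable_eq (fsym (tensorE f g)) _.
apply: realizable_Tmap_inj (can_inj unsplitK) _.
apply: realizable_comp_inj (can_inj splitK) _.
exact: realizable_sum_tensor.
Qed.

Lemma ord_inj_of_val_eq (n p : nat) (h : 'I_n -> 'I_p) :
  (forall i, h i = i :> nat) -> injective h.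
Proof.
by move=> hval i j /(congr1 (@nat_of_ord p)); rewrite !hval => /val_inj.
Qed.

Lemma val_assoc_ord (m k l : nat) (i : 'I_(m + k + l)) :
  assoc_ord m k l i = i :> nat.
Proof.
rewrite /assoc_ord; case: splitP => [j ->|c ->]; last by rewrite /= addnA.
by case: splitP => [a ->|b ->].
Qed.

Lemma val_assoc_inv_ord (m k l : nat) (i : 'I_(m + (k + l))) :
  assoc_inv_ord m k l i = i :> nat.
Proof.
rewrite /assoc_inv_ord; case: splitP => [a ->|j ->] //=.
by case: splitP => [b ->|c ->] //=; rewrite addnA.
Qed.

Lemma braid_ordK (m k : nat) : cancel (braid_ord m k) (braid_ord k m).
Proof.
move=> i; rewrite /braid_ord; case: (split_ordP i) => [a|b] ->.
  by rewrite (unsplitK (inr a)).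
by rewrite (unsplitK (inl b)).
Qed.

Theorem propositionB2 :
  (* (1) subcategory of Kl(T): identities and composites of realizable arrows
     are realizable, and the Kleisli identity/composition are those of S^P_r *)
  (forall n : nat, realizable (@eta 'I_n) /\ (forall i : 'I_n, eta i = sid n i)) /\
  (forall (m l n : nat) (f : 'I_m -> play 'I_l) (g : 'I_l -> play 'I_n),
      realizable f -> realizable g ->
      realizable (kcomp f g) /\ (forall i, kcomp f g i = scomp f g i)) /\
  (* (2) closure under the coproduct monoidal structure of Kl(T) *)
  (forall (m m' k k' : nat) (f : 'I_m -> play 'I_m') (g : 'I_k -> play 'I_k'),
      realizable f -> realizable g -> realizable (tensor f g)) /\
  (forall m k l : nat,
      realizable (fun i => eta (assoc_ord m k l i)) /\
      realizable (fun i => eta (assoc_inv_ord m k l i))) /\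
  (forall m : nat,
      realizable (fun i => eta (lunit_ord m i)) /\
      realizable (fun i => eta (lunit_inv_ord m i)) /\
      realizable (fun i => eta (runit_ord m i)) /\
      realizable (fun i => eta (runit_inv_ord m i))) /\
  (forall m k : nat, realizable (fun i => eta (braid_ord m k i))).
Proof.
split; first by move=> n; split=> //; exact: realizable_eta_inj (@inj_id 'I_n).
split.
  move=> m l n f g fR gR; split; [exact: realizable_kcomp | exact: kcompE].
split; first exact: realizable_tensor.
split.
  by move=> m k l; split; apply/realizable_eta_inj/ord_inj_of_val_eq;
    [exact: val_assoc_ord | exact: val_assoc_inv_ord].
split.
  by move=> m; split; [|split; [|split]];
    apply: realizable_eta_inj; exact: cast_ord_inj.
by move=> m k; apply/realizable_eta_inj/(can_inj (braid_ordK m k)).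
Qed.
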